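(* Fix $\epsilon>0$ and $n\in\mathbb{N}$. There is no constant $c$ such that $QK^{\epsilon}(|\sigma\rangle\langle\sigma|)\ge K(\sigma)-c$ for all unit vectors $\sigma\in\mathbb{C}^{2^n}_{alg}$. In particular, it is not the case that $QK^{\epsilon}(|\sigma\rangle\langle\sigma|)$ and $K(\sigma)$ agree up to an additive constant for all unit vectors $\sigma\in\mathbb{C}^{2^n}_{alg}$.
   Context: Let $\mathbb{U}$ be a fixed universal prefix-free Turing machine and $K$ the associated prefix-free Kolmogorov complexity. Finite sets of vectors with complex algebraic entries (and single such vectors) are coded by natural numbers via a fixed canonical effective indexing; for a vector $\sigma$ with complex algebraic entries, $K(\sigma)$ is the prefix-free complexity of its code. $\mathbb{U}(\sigma)\downarrow=F$ means that $\mathbb{U}$ on input $\sigma$ halts and outputs the code of $F$. $\mathbb{C}^{2^n}_{alg}$ denotes the set of vectors in $\mathbb{C}^{2^n}$ all of whose entries are complex algebraic numbers. All logarithms are base 2. For a density matrix $\tau$ on $\mathbb{C}^{2^{n}}$ write $|\tau|=n$. For $\epsilon>0$ define $QK^{\epsilon}(\tau)=\inf\{|\sigma|+\log|F| : \mathbb{U}(\sigma)\downarrow=F,\ F \text{ an orthonormal subset of } \mathbb{C}^{2^{|\tau|}}_{alg},\ \sum_{v\in F}\langle v|\tau|v\rangle>\epsilon\}$, with $\inf\emptyset=\infty$. *)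

From HB Require Import structures.
From mathcomp Require Import all_boot all_order all_algebra all_field.
From mathcomp Require Import finmap.
From mathcomp Require Import all_classical all_reals.
From mathcomp Require Import all_analysis Rstruct.
Notation R := Rdefinitions.R.

Set Implicit Arguments.
Unset Strict Implicit.
Unset Printing Implicit Defensive.

Import Order.TTheory GRing.Theory Num.Theory.

Inductive rfun : Type :=
| rzero
| rsucc
| rproj (i : nat)
| rcomp (f : rfun) (gs : seq rfun)
| rprec (f g : rfun)                 (* primitive recursion on 1st arg    *)
| rmu (f : rfun).

(* Big-step evaluation: [reval e v y] means program e on input v halts with
   output y (missing arguments default to 0). *)
Inductive reval : rfun -> seq nat -> nat -> Prop :=
| ev_zero v : reval rzero v 0
| ev_succ v : reval rsucc v (head 0%N v).+1
| ev_proj i v : reval (rproj i) v (nth 0%N v i)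
| ev_comp f gs v ws y :
    revals gs v ws -> reval f ws y -> reval (rcomp f gs) v y
| ev_prec0 f g v y : reval f v y -> reval (rprec f g) (0%N :: v) y
| ev_precS f g k v r y :
    reval (rprec f g) (k :: v) r -> reval g (k :: r :: v) y ->
    reval (rprec f g) (k.+1 :: v) y
| ev_mu f v k :
    reval f (k :: v) 0%N ->
    (forall j, (j < k)%N -> exists m, reval f (j :: v) m.+1) ->
    reval (rmu f) v k
with revals : seq rfun -> seq nat -> seq nat -> Prop :=
| evs_nil v : revals [::] v [::]
| evs_cons g gs v y ys :
    reval g v y -> revals gs v ys -> revals (g :: gs) v (y :: ys).

(* Machines: partial maps from binary strings to natural numbers.
   Binary strings are coded by naturals through [pickle] (an effective
   bijection-onto-its-image of seq bool into nat). *)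
Definition machine := seq bool -> option nat.

Definition computable_machine (M : machine) : Prop :=
  exists e : rfun, forall (p : seq bool) (y : nat),
    M p = Some y <-> reval e [:: choice.pickle p] y.

Definition prefix_free (M : machine) : Prop :=
  forall p q : seq bool, M p <> None -> M q <> None -> prefix p q -> p = q.

Definition universal_prefix_free (U : machine) : Prop :=
  [/\ computable_machine U, prefix_free U &
      forall M : machine, computable_machine M -> prefix_free M ->
        exists tau : seq bool, forall p, U (tau ++ p) = M p].

Local Open Scope ring_scope.
Local Open Scope classical_set_scope.

Definition Kc (U : machine) (x : nat) : \bar R :=
  ereal_inf [set ((size p)%:R : R)%:E | p in [set p : seq bool | U p = Some x]].

Definition vec (n : nat) := 'cV[algC]_(2 ^ n).

Definition adj (m k : nat) (A : 'M[algC]_(m, k)) : 'M[algC]_(k, m) :=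
  (map_mx Num.conj A)^T.

Definition inner (n : nat) (u v : vec n) : algC := (adj u *m v) 0 0.

Definition unit_vector (n : nat) (v : vec n) : Prop := inner v v = 1.

Definition orthonormal (n : nat) (F : {fset vec n}) : Prop :=
  forall u v, u \in F -> v \in F -> inner u v = (u == v)%:R.

Definition pure_state (n : nat) (s : vec n) : 'M[algC]_(2 ^ n) := s *m adj s.

Definition expect (n : nat) (tau : 'M[algC]_(2 ^ n)) (v : vec n) : algC :=
  (adj v *m tau *m v) 0 0.

(* The real number corresponding to (the real part of) an algebraic number,
   defined as a Dedekind cut. *)
Definition algC_to_R (x : algC) : R :=
  sup [set (ratr q : R) | q in [set q : rat | ratr q <= 'Re x]].

Definition log2 (x : R) : R := ln x / ln 2.

Definition QK (U : machine) (eps : R) (n : nat) (tau : 'M[algC]_(2 ^ n)) : \bar R :=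
  ereal_inf [set x : \bar R | exists (s : seq bool) (F : {fset vec n}),
     [/\ U s = Some (choice.pickle F), orthonormal F,
         eps < algC_to_R (\sum_(v <- F) expect tau v) &
         x = ((size s)%:R + log2 (size (enum_fset F))%:R)%:E]].

(* The two sides behave very differently on the infinite family of unit vectors
   s_k = z_k e_0, where z_k = (1 + k i)/(1 - k i) runs through infinitely many
   distinct algebraic numbers of modulus one:
   - QK^eps is uniformly bounded on pure states: a fixed program printing the
     standard basis F of C^(2^n) witnesses every QK^eps(|s><s|), since the
     captured weight sum_{v in F} <v|s><s|v> = tr |s><s| = <s|s> = 1 > eps;
   - K is unbounded on any injective family, since fewer than 2^L strings have
     length below L (pigeonhole on a binary coding of strings). *)
From Pilot Require Import Defs.
From HB Require Import structures.
From mathcomp Require Import all_boot all_order all_algebra all_field.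
From mathcomp Require Import finmap.
From mathcomp Require Import all_classical all_reals.
From mathcomp Require Import all_analysis Rstruct.
From mathcomp Require Import ring zify.

Import Order.TTheory GRing.Theory Num.Theory.
Set Implicit Arguments. Unset Strict Implicit. Unset Printing Implicit Defensive.

Fixpoint const_rfun (N : nat) : rfun :=
  if N is N'.+1 then rcomp rsucc [:: const_rfun N'] else rzero.

Lemma const_rfun_eval N v : reval (const_rfun N) v N.
Proof.
elim: N v => [|N IH] v /=; first exact: ev_zero.
apply: (ev_comp (ws := [:: N])); last exact: ev_succ.
by apply: evs_cons; [exact: IH | exact: evs_nil].
Qed.

Lemma reval_compE f gs v y :
  reval (rcomp f gs) v y -> exists ws, revals gs v ws /\ reval f ws y.
Proof. by move=> H; inversion H; subst; eauto. Qed.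

Lemma revals_singleE g v ws : revals [:: g] v ws -> exists y, ws = [:: y] /\ reval g v y.
Proof.
move=> H; inversion H; subst.
match goal with h : revals [::] _ _ |- _ => inversion h end; subst; eauto.
Qed.

Lemma reval_succE v y : reval rsucc v y -> y = (head 0%N v).+1.
Proof. by move=> H; inversion H. Qed.

Lemma reval_projE i v y : reval (rproj i) v y -> y = nth 0%N v i.
Proof. by move=> H; inversion H. Qed.

Lemma reval_muE f v k : reval (rmu f) v k -> reval f (k :: v) 0%N.
Proof. by move=> H; inversion H. Qed.

Lemma const_rfun_evalE N v y : reval (const_rfun N) v y -> y = N.
Proof.
elim: N v y => [|N IH] v y /= H; first by inversion H.
case/reval_compE: H => ws [/revals_singleE [z [-> hz]] /reval_succE ->].
by rewrite /= (IH _ _ hz).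
Qed.

Definition const_machine (N : nat) : machine :=
  fun p => if p is [::] then Some N else None.

(* It is computed by "halt only when the input code is 0, then output N";
   the empty string is the only string coded by 0. *)
Lemma const_machine_computable N : computable_machine (const_machine N).
Proof.
have pickle_nil (p : seq bool) : choice.pickle p = 0%N -> p = [::].
  by move=> h; apply: (pcan_inj (@choice.pickleK (seq bool))); rewrite h.
exists (rcomp (const_rfun N) [:: rmu (rproj 1)]) => p y; split.
- case: p => //= -[<-].
  apply: (ev_comp (ws := [:: 0%N])); last exact: const_rfun_eval.
  apply: evs_cons; last exact: evs_nil.
  by apply: ev_mu => //; exact: (ev_proj 1 [:: 0%N; 0%N]).
- case/reval_compE=> ws [/revals_singleE [z [-> /reval_muE /reval_projE /= e0]]].
  by move=> /const_rfun_evalE ->; rewrite (pickle_nil p (esym e0)).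
Qed.

Lemma const_machine_prefix_free N : prefix_free (const_machine N).
Proof. by move=> [|a p] [|b q]. Qed.

(* A universal prefix-free machine prints every number: simulate const_machine. *)
Lemma universal_prints_all U : universal_prefix_free U -> forall N, exists s, U s = Some N.
Proof.
case=> _ _ simulate N.
have [tau Htau] := simulate _ (@const_machine_computable N) (@const_machine_prefix_free N).
by exists tau; rewrite -(cats0 tau) Htau.
Qed.

(* Binary coding of strings with a leading 1: injective, and strings of
   length l get codes below 2^(l+1). *)
Fixpoint bin_code (p : seq bool) : nat :=
  if p is b :: p' then b + (bin_code p').*2 else 1.

Lemma bin_code_gt0 p : (0 < bin_code p)%N.
Proof. by elim: p => //= b p; rewrite -double_gt0 => /leq_trans; apply; rewrite leq_addl. Qed.

Lemma bin_code_lt p : (bin_code p < 2 ^ (size p).+1)%N.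
Proof.
elim: p => //= b p IH; rewrite expnS mul2n.
by case: b; rewrite /= ?add0n ?add1n ?ltn_double ?ltn_Sdouble.
Qed.

Lemma bin_code_inj : injective bin_code.
Proof.
elim=> [|b p IH] [|c q] /=.
- by [].
- by have := bin_code_gt0 q; case: c => /=; lia.
- by have := bin_code_gt0 p; case: b => /=; lia.
- move=> h; have hb : b = c.
    by have := congr1 odd h; rewrite !oddD !odd_double !addbF; case: b c {h} => [] [].
  by subst c; congr (_ :: _); apply: IH; move/addnI: h; lia.
Qed.

(* Pigeonhole: no machine has programs shorter than L for infinitely many
   distinct outputs, since there are fewer than 2^L such programs. *)
Lemma short_programs_finite (U : machine) (f : nat -> nat) (L : nat) :
  injective f -> ~ (forall k, exists p : seq bool, U p = Some (f k) /\ (size p < L)%N).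
Proof.
move=> finj /boolp.choice [prog hprog].
have code_small (k : 'I_(2 ^ L).+1) : (bin_code (prog k) < 2 ^ L)%N.
  by apply: leq_trans (bin_code_lt _) _; rewrite leq_pexp2l //; exact: (hprog k).2.
pose h (k : 'I_(2 ^ L).+1) : 'I_(2 ^ L) := Ordinal (code_small k).
have h_inj : injective h.
  move=> a b /(congr1 val) /= /bin_code_inj e; apply/val_inj/finj.
  by have := (hprog a).1; rewrite e (hprog b).1 => -[].
by have := leq_card h h_inj; rewrite !card_ord ltnn.
Qed.

Local Open Scope ring_scope.

Lemma Kc_unbounded (U : machine) (f : nat -> nat) (x : R) :
  injective f -> ~ (forall k, (Kc U (f k) <= x%:E)%E).
Proof.
move=> finj bounded; set L := Num.Def.archi_bound `|x + 1|.
have x1_lt_L : x + 1 < L%:R.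
  by apply: le_lt_trans (ler_norm _) _; exact: archi_boundP.
apply: (short_programs_finite (U := U) (L := L) finj) => k.
have : (Kc U (f k) < (x + 1)%:E)%E by apply: le_lt_trans (bounded k) _; rewrite lte_fin ltrDl.
case/ereal_inf_lt => _ [p hp <-]; rewrite lte_fin => hp_lt.
by exists p; split => //; rewrite -(ltr_nat R); exact: lt_trans hp_lt x1_lt_L.
Qed.

Lemma algC_to_R1 : algC_to_R 1 = 1.
Proof.
have Re1 : 'Re (1 : algC) = 1 by rewrite ReE conjC1 -mulr2n -mulr_natl mulr1 mulfV // pnatr_eq0.
have below1 (q : rat) : (ratr q <= 1 :> algC) -> (ratr q <= 1 :> R).
  by rewrite -(rmorph1 (@ratr algC)) -(rmorph1 (@ratr R)) !ler_rat.
rewrite /algC_to_R Re1; apply/le_anti/andP; split.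
- apply: ge_sup; first by exists 1; exists 1%Q; rewrite /= ?rmorph1.
  by move=> _ [q hq <-]; exact: below1.
- apply: ub_le_sup; last by exists 1%Q; rewrite /= ?rmorph1.
  by exists 1 => _ [q hq <-]; exact: below1.
Qed.

Definition std_vec (n : nat) (i : 'I_(2 ^ n)) : vec n := delta_mx i 0.

Lemma adj_std_vec n (i : 'I_(2 ^ n)) : adj (std_vec i) = delta_mx 0 i.
Proof. by apply/matrixP => a b; rewrite !mxE conjC_nat andbC. Qed.

Lemma inner_std_vec n (i j : 'I_(2 ^ n)) : inner (std_vec i) (std_vec j) = (i == j)%:R.
Proof.
rewrite /inner adj_std_vec /std_vec mul_delta_mx_cond.
by case: (i == j); rewrite ?mxE ?eqxx.
Qed.

Lemma std_vec_inj n : injective (@std_vec n).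
Proof.
move=> i j eij; have := inner_std_vec i j; rewrite eij inner_std_vec eqxx.
by case: eqP => // _ /eqP; rewrite oner_eq0.
Qed.

Definition std_basis (n : nat) : {fset vec n} :=
  seq_fset tt [seq std_vec i | i <- enum 'I_(2 ^ n)].

Lemma std_basis_orthonormal n : Defs.orthonormal (std_basis n).
Proof.
move=> u v; rewrite !seq_fsetE => /mapP [i _ ->] /mapP [j _ ->].
by rewrite inner_std_vec (inj_eq (@std_vec_inj n)).
Qed.

Lemma expect_std_vec n (tau : 'M[algC]_(2 ^ n)) i : expect tau (std_vec i) = tau i i.
Proof. by rewrite /expect adj_std_vec /std_vec -rowE -colE !mxE. Qed.

Lemma sum_expect_std_basis n (tau : 'M[algC]_(2 ^ n)) :
  \sum_(v <- std_basis n) expect tau v = \tr tau.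
Proof.
rewrite (perm_big _ (seq_fset_perm _ _)) undup_id; last first.
  by rewrite map_inj_uniq ?enum_uniq //; exact: std_vec_inj.
by rewrite big_map big_enum; apply: eq_bigr => i _; rewrite expect_std_vec.
Qed.

Lemma tr_pure_state n (s : vec n) : \tr (pure_state s) = inner s s.
Proof. by rewrite /pure_state mxtrace_mulC trace_mx11. Qed.

(* QK^eps is bounded on pure states of unit vectors, for eps < 1: the program
   printing the standard basis is a witness for every such state. *)
Lemma QK_pure_bounded U (eps : R) (n : nat) :
  universal_prefix_free U -> eps < 1 ->
  exists B : R, forall sigma : vec n, unit_vector sigma ->
    (QK U eps (pure_state sigma) <= B%:E)%E.
Proof.
move=> hU eps_lt1; have [s hs] := universal_prints_all hU (choice.pickle (std_basis n)).
exists ((size s)%:R + log2 (size (enum_fset (std_basis n)))%:R) => sigma unit_sigma.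
apply: ereal_inf_lbound; exists s, (std_basis n); split => //.
- exact: std_basis_orthonormal.
- by rewrite sum_expect_std_basis tr_pure_state unit_sigma algC_to_R1.
Qed.

Definition phase_denom (k : nat) : algC := 1 - k%:R * 'i.

Lemma phase_denom_conj k : (phase_denom k)^* = 1 + k%:R * 'i.
Proof. by rewrite /phase_denom rmorphB rmorph1 rmorphM rmorph_nat /= conjCi mulrN opprK. Qed.

Lemma phase_denom_neq0 k : phase_denom k != 0.
Proof.
apply/negP => /eqP h.
have : phase_denom k + (phase_denom k)^* = 2%:R by rewrite phase_denom_conj /phase_denom; ring.
by rewrite h conjC0 addr0 => /eqP; rewrite eq_sym pnatr_eq0.
Qed.

Definition phase (k : nat) : algC := (phase_denom k)^* / phase_denom k.

Lemma phase_norm k : (phase k)^* * phase k = 1.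
Proof.
have d_neq0 := phase_denom_neq0 k.
have dc_neq0 : (phase_denom k)^* != 0 by rewrite conjC_eq0.
by rewrite /phase rmorphM fmorphV /= conjCK mulrA divfK // mulfV.
Qed.

Lemma phase_inj : injective phase.
Proof.
move=> k m /eqP; rewrite /phase eqr_div ?phase_denom_neq0 ?conjC_eq0 ?phase_denom_neq0 //.
rewrite !phase_denom_conj /phase_denom => /eqP h.
have E : (1 + k%:R * 'i) * (1 - m%:R * 'i) - (1 + m%:R * 'i) * (1 - k%:R * 'i)
   = 2%:R * (k%:R - m%:R) * 'i :> algC by ring.
move: E; rewrite h subrr => /esym /eqP.
by rewrite !mulf_eq0 pnatr_eq0 (negbTE (neq0Ci _)) orbF /= subr_eq0 eqr_nat => /eqP.
Qed.

Definition first_index (n : nat) : 'I_(2 ^ n) := Ordinal (expn_gt0 2 n).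

Definition phase_vec (n k : nat) : vec n := phase k *: std_vec (first_index n).

Lemma adjZ n (a : algC) (u : vec n) : adj (a *: u) = a^* *: adj u.
Proof. by apply/matrixP => x y; rewrite !mxE rmorphM. Qed.

Lemma phase_vec_unit n k : unit_vector (phase_vec n k).
Proof.
have := inner_std_vec (first_index n) (first_index n); rewrite eqxx /inner => e0.
rewrite /unit_vector /inner /phase_vec adjZ -scalemxAl -scalemxAr mxE [X in _ * X]mxE e0.
by rewrite mulr1 phase_norm.
Qed.

Lemma phase_vec_inj n : injective (phase_vec n).
Proof.
move=> k m /matrixP /(_ (first_index n) 0); rewrite !mxE eqxx /= !mulr1.
exact: phase_inj.
Qed.

Theorem mainTheorem6 (U : machine) (hU : universal_prefix_free U)
    (eps : R) (heps0 : 0 < eps) (heps1 : eps < 1) (n : nat) :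
  ~ (exists c : R, forall sigma : vec n, unit_vector sigma ->
        (Kc U (choice.pickle sigma) - c%:E <= QK U eps (pure_state sigma))%E).
Proof.
case=> c lower_bound.
have [B QK_le_B] := QK_pure_bounded n hU heps1.
apply: (@Kc_unbounded U (fun k => choice.pickle (phase_vec n k)) (B + c)).
  by move=> a b /(pcan_inj choice.pickleK); exact: phase_vec_inj.
move=> k; have unit_k := phase_vec_unit n k.
have := le_trans (lower_bound _ unit_k) (QK_le_B _ unit_k).
by rewrite leeBlDr // EFinD.
Qed.
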